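(* Let $\{F_1,\ldots,F_m\}$, $m\ge 2$, be a collection of $X$-forests, either all rooted or all unrooted. Let $1\le p\le m$ and let $T_1,\ldots,T_t$ ($t\ge1$) be connected components of $F_p$, with $Y=L(T_1)\cup\cdots\cup L(T_t)$. Suppose that for some $q\neq p$, $1\le q\le m$, there is an edge $e$ of $F_q$ such that, if $T_e^1$ and $T_e^2$ denote the two subtrees created by removing $e$ from $F_q$, we have $L(T_e^1)\subseteq Y$ and $L(T_e^2)\cap Y=\emptyset$. Let $F'_q=F_q\setminus\{e\}$ and $F'_j=F_j$ for $j\neq q$. Then $\{F'_1,\ldots,F'_m\}$ and $\{F_1,\ldots,F_m\}$ have the same collection of maximum agreement forests.
   Context: Let $X$ be a finite label set. An unrooted $X$-forest is a subgraph of a tree whose leaves are labeled bijectively by $X$ and whose unlabeled vertices have degree at least 3, such that each component contains a leaf and the label sets of the components partition $X$. A rooted $X$-forest is defined in the same way, where $X$ contains a distinguished label $\rho$ whose leaf is the root of the underlying tree $T$, and each component is rooted at $\rho$ if it contains it and otherwise at the lowest common ancestor in $T$ of its labeled leaves. Forests are considered up to forced contraction (unlabeled degree-2 vertices other than component roots are suppressed; unlabeled vertices of degree less than 2 are deleted). For a subtree $T'$, $L(T')$ is its set of labels. $\mathrm{Ord}(F)$ is the number of components. $F'$ is a subforest of $F$ if, up to forced contraction, $F'$ is isomorphic (preserving labels, and roots in the rooted case) to $F$ with some edges deleted. An agreement forest for a collection of $X$-forests is an $X$-forest that is a subforest of each of them; a maximum agreement forest is one of minimum order. $F\setminus\{e\}$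 denotes $F$ with edge $e$ deleted. *)

From mathcomp Require Import all_boot.
Unset Printing Implicit Defensive.

(* An X-forest is represented concretely by its underlying tree T (vertices
   'I_fn, symmetric edge relation tE, leaf labelling lab : X -> 'I_fn) together
   with the subgraph (vertex set fV, symmetric edge relation fE) of T.
   Rooted/unrooted is encoded by  r : option X  (None = unrooted,
   Some rho = rooted with distinguished root label rho). *)

Record forest (X : finType) := Forest {
  fn : nat;
  tE : rel 'I_fn;
  lab : X -> 'I_fn;
  fV : {set 'I_fn};
  fE : rel 'I_fn }.
Arguments Forest {X}.
Arguments fn {X}.
Arguments tE {X}.
Arguments lab {X}.
Arguments fV {X}.
Arguments fE {X}.

Section Forests.
Context {X : finType}.
Implicit Types (F G A : forest X) (r : option X).

Definition avoid (n : nat) (E : rel 'I_n) (w : 'I_n) : rel 'I_n :=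
  [rel a b | E a b && (a != w) && (b != w)].
Arguments avoid {n}.

(* w lies on the (unique, in an acyclic graph) E-path from a to b *)
Definition onpath (n : nat) (E : rel 'I_n) (a b w : 'I_n) : bool :=
  connect E a b && [|| w == a, w == b | ~~ connect (avoid E w) a b].
Arguments onpath {n}.

Definition rmedge (n : nat) (E : rel 'I_n) (u v : 'I_n) : rel 'I_n :=
  [rel a b | E a b && ~~ (((a == u) && (b == v)) || ((a == v) && (b == u)))].
Arguments rmedge {n}.

Definition tdeg F (v : 'I_(fn F)) : nat := #|[set w | tE F v w]|.

Definition is_tree F : Prop :=
  symmetric (tE F) /\ irreflexive (tE F) /\
  (forall a b, connect (tE F) a b) /\
  (* acyclic: every edge is a bridge *)
  (forall u v, tE F u v -> ~~ connect (rmedge (tE F) u v) u v).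

Definition is_phylo F : Prop :=
  injective (lab F) /\
  (forall v, v \in codom (lab F) -> tdeg F v <= 1) /\
  (forall v, v \notin codom (lab F) -> 3 <= tdeg F v).

Definition is_Xforest F : Prop :=
  is_tree F /\ is_phylo F /\
  symmetric (fE F) /\
  (forall a b, fE F a b -> tE F a b) /\
  (forall a b, fE F a b -> (a \in fV F) && (b \in fV F)) /\
  (forall x, lab F x \in fV F) /\
  (forall v, v \in fV F -> exists x, connect (fE F) v (lab F x)).

(* vertices surviving the iterated deletion of unlabelled vertices of degree < 2:
   those lying on a path of F between two labelled leaves *)
Definition hull F (v : 'I_(fn F)) : bool :=
  (v \in fV F) && [exists x, exists y, onpath (fE F) (lab F x) (lab F y) v].

Definition hdeg F (v : 'I_(fn F)) : nat := #|[set w | fE F v w && hull F w]|.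

(* u is an ancestor of v in T rooted at the leaf labelled rho *)
Definition anc F (rho : X) (u v : 'I_(fn F)) : bool :=
  onpath (tE F) (lab F rho) v u.

Definition is_lca F (rho : X) (S : {set 'I_(fn F)}) (u : 'I_(fn F)) : bool :=
  [forall s in S, anc F rho u s] &&
  [forall w, [forall s in S, anc F rho w s] ==> anc F rho w u].

Definition compL F (v : 'I_(fn F)) : {set 'I_(fn F)} :=
  [set w | [exists x, (w == lab F x) && connect (fE F) v (lab F x)]].

Definition croot F r (v : 'I_(fn F)) : bool :=
  match r with
  | None => false
  | Some rho =>
      (v \in fV F) &&
      (if connect (fE F) v (lab F rho) then v == lab F rho
       else is_lca F rho (compL F v) v)
  end.

(* vertices kept by forced contraction *)
Definition kept F r (v : 'I_(fn F)) : bool :=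
  hull F v && [|| v \in codom (lab F), 3 <= hdeg F v | croot F r v].

Definition cedge F r (a b : 'I_(fn F)) : bool :=
  [&& kept F r a, kept F r b, a != b, connect (fE F) a b &
      [forall w, onpath (fE F) a b w ==> kept F r w ==> (w == a) || (w == b)]].

Definition fiso r F G : Prop :=
  exists f : 'I_(fn F) -> 'I_(fn G),
    {in kept F r &, injective f} /\
    (forall w, kept G r w <-> exists2 v, kept F r v & f v = w) /\
    (forall a b, kept F r a -> kept F r b -> cedge G r (f a) (f b) = cedge F r a b) /\
    (forall x, f (lab F x) = lab G x) /\
    (forall v, kept F r v -> croot G r (f v) = croot F r v).

Definition with_edges F (E : rel 'I_(fn F)) : forest X :=
  @Forest X (fn F) (tE F) (lab F) (fV F) E.

Definition del_edge F (u v : 'I_(fn F)) : forest X :=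
  with_edges F (rmedge (fE F) u v).

Definition subforest r A F : Prop :=
  exists E : rel 'I_(fn F),
    (forall a b, E a b -> fE F a b) /\ symmetric E /\ fiso r A (with_edges F E).

Definition Ord F : nat :=
  #|[set [set w in fV F | connect (fE F) v w] | v in fV F]|.

Definition agreement r (m : nat) (Fs : 'I_m -> forest X) A : Prop :=
  is_Xforest A /\ forall i, subforest r A (Fs i).

Definition maf r (m : nat) (Fs : 'I_m -> forest X) A : Prop :=
  agreement r m Fs A /\ forall B, agreement r m Fs B -> Ord A <= Ord B.

End Forests.

From mathcomp Require Import all_boot.
Set Implicit Arguments. Unset Strict Implicit. Unset Printing Implicit Defensive.

(* Every agreement forest of the modified collection is one of the original
   collection, and conversely; so both have the same maximum agreement forests.
   For the converse, let E be a subforest of F_q realising an agreement forest B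
   and containing e = {u,v}.  Labels on both sides of E \ e would be connected
   in B, hence in F_p, which would put a label outside Y in the component of a
   label in Y.  So one side of E \ e is leafless, and deleting an edge into a
   leafless component changes neither the hull, the degrees inside it, nor the
   component roots: the forced contraction, and with it the isomorphism with B,
   survives the deletion of e. *)

Section Graph.
Variable n : nat.
Implicit Types (R S : rel 'I_n).

Definition subrel_plus_edge R S (c d : 'I_n) :=
  forall x y, R x y -> ~~ S x y -> ((x == c) && (y == d)) || ((x == d) && (y == c)).

Lemma subrel_plus_edgeC R S c d :
  subrel_plus_edge R S c d -> subrel_plus_edge R S d c.
Proof. by move=> RS x y Rxy /(RS _ _ Rxy); rewrite orbC. Qed.

Lemma connect_subrel R S : subrel R S -> subrel (connect R) (connect S).
Proof. by move=> RS; apply: connect_sub => x y /RS/connect1. Qed.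

Lemma connect_plus_edge R S c d a b : subrel_plus_edge R S c d ->
  connect R a b -> [|| connect S a b, connect S a c | connect S a d].
Proof.
move=> RS /connectP[s Rs ->] {b}.
suff: forall z, path R z s -> [|| connect S a z, connect S a c | connect S a d] ->
    [|| connect S a (last z s), connect S a c | connect S a d].
  by apply; rewrite ?connect0.
move=> {Rs}; elim: s => [|y s IHs] z //= /andP[Rzy Rs] Hz; apply: IHs Rs _.
case/or3P: Hz => [Saz|->|->]; rewrite ?orbT //.
case Szy: (S z y); first by rewrite (connect_trans Saz (connect1 Szy)).
by case/orP: (RS _ _ Rzy (negbT Szy)) => /andP[/eqP Ez _]; rewrite -Ez Saz ?orbT.
Qed.

Lemma connect_plus_edgeE R S c d a b :
  symmetric R -> symmetric S -> subrel S R -> subrel_plus_edge R S c d ->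
  ~~ connect S a c -> ~~ connect S b c -> connect R a b = connect S a b.
Proof.
move=> sR sS SR RS Nac Nbc; apply/idP/idP => [Rab|]; last exact: connect_subrel.
have cS := sym_connect_sym sS.
have Rba : connect R b a by rewrite (sym_connect_sym sR).
case/or3P: (connect_plus_edge RS Rab) => [//|Sac|Sad]; first by rewrite Sac in Nac.
case/or3P: (connect_plus_edge RS Rba) => [Sba|Sbc|Sbd]; first by rewrite cS.
  by rewrite Sbc in Nbc.
by rewrite (connect_trans Sad) // cS.
Qed.

Lemma avoid_sub R w : subrel (avoid _ R w) R.
Proof. by move=> x y /andP[/andP[]]. Qed.

Lemma avoid_subrel R S w : subrel S R -> subrel (avoid _ S w) (avoid _ R w).
Proof. by move=> SR x y /andP[/andP[/SR Rxy xw] yw]; rewrite /avoid /= Rxy xw yw. Qed.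

Lemma avoid_sym R w : symmetric R -> symmetric (avoid _ R w).
Proof. by move=> sR x y; rewrite /avoid /= sR -!andbA (andbC (y != w)). Qed.

Lemma avoid_plus_edge R S c d w : subrel_plus_edge R S c d ->
  subrel_plus_edge (avoid _ R w) (avoid _ S w) c d.
Proof.
by move=> RS x y /andP[/andP[Rxy xw] yw]; rewrite /avoid /= xw yw !andbT; apply: RS.
Qed.

Lemma path_avoid R w a s :
  path R a s -> all (predC1 w) (a :: s) -> path (avoid _ R w) a s.
Proof.
elim: s a => [|y s IHs] a //= /andP[Ray Rs] /and3P[aw yw Hs].
by rewrite /avoid /= Ray aw yw IHs //= yw.
Qed.

Lemma onpath_connect R a b z : onpath _ R a b z -> connect R a z.
Proof.
case/andP=> Rab /or3P[/eqP->|/eqP->//|]; first exact: connect0.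
apply: contraR => Naz; case/connectP: Rab => s Rs ->; apply/connectP; exists s => //.
elim: s a Rs Naz => [|y s IHs] a //= /andP[Ray Rs] Naz.
have Nyz : ~~ connect R y z.
  by apply: contra Naz; apply: connect_trans (connect1 Ray).
rewrite /avoid /= Ray IHs // !andbT.
by apply/andP; split; apply/eqP => E; [move: Naz|move: Nyz]; rewrite E connect0.
Qed.

Lemma onpath_plus_edgeE R S c d a b w :
  symmetric R -> symmetric S -> subrel S R -> subrel_plus_edge R S c d ->
  ~~ connect S a c -> ~~ connect S b c -> onpath _ R a b w = onpath _ S a b w.
Proof.
move=> sR sS SR RS Nac Nbc; rewrite /onpath (connect_plus_edgeE sR sS SR RS) //.
have Navoid z : ~~ connect S z c -> ~~ connect (avoid _ S w) z c.
  by apply: contra; apply: connect_subrel; apply: avoid_sub.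
by rewrite (connect_plus_edgeE (avoid_sym w sR) (avoid_sym w sS) (avoid_subrel (w:=w) SR)
  (avoid_plus_edge (w:=w) RS) (Navoid _ Nac) (Navoid _ Nbc)).
Qed.

Lemma rmedge_sub R c d : subrel (rmedge _ R c d) R.
Proof. by move=> x y /andP[]. Qed.

Lemma rmedge_sym R c d : symmetric R -> symmetric (rmedge _ R c d).
Proof.
move=> sR x y; rewrite /rmedge /= sR orbC.
by rewrite (andbC (y == c)) (andbC (y == d)).
Qed.

Lemma rmedge_plus_edge R c d : subrel_plus_edge R (rmedge _ R c d) c d.
Proof. by move=> x y Rxy; rewrite /rmedge /= Rxy negbK. Qed.

End Graph.

Section Contraction.
Variable X : finType.
Implicit Types (H A G : forest X) (r : option X).

Lemma kept_lab H r x : lab H x \in fV H -> kept H r (lab H x).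
Proof.
move=> Hx; rewrite /kept /hull Hx codom_f andbT.
by apply/existsP; exists x; apply/existsP; exists x; rewrite /onpath connect0 eqxx.
Qed.

Lemma cedge_unkept_path H r a w s :
  kept H r a -> kept H r w -> a != w -> path (fE H) a (rcons s w) ->
  ~~ has (kept H r) s -> cedge H r a w.
Proof.
move=> Ka Kw aw Hs Ns; rewrite /cedge Ka Kw aw /=; apply/andP; split.
  by apply/connectP; exists (rcons s w); rewrite ?last_rcons.
apply/forallP => z; apply/implyP => /andP[_ Hon]; apply/implyP => Kz.
case: (eqVneq z a) => [//|za]; case: (eqVneq z w) => [//|zw].
move: Hon; rewrite (negPf za) (negPf zw) /= => /negP[]; apply/connectP.
exists (rcons s w); rewrite ?last_rcons //; apply: path_avoid Hs _.
rewrite /= all_rcons /= eq_sym za eq_sym zw /=; apply/allP => y ys /=.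
by apply: contraNneq Ns => yz; apply/hasP; exists y; rewrite // yz.
Qed.

Lemma connect_cedgeE H r a b : kept H r a -> kept H r b ->
  connect (cedge H r) a b = connect (fE H) a b.
Proof.
move=> Ka Kb; apply/idP/idP; first by apply: connect_sub => x y /and5P[].
case/connectP=> s Hs Eb; have [k] := ubnP (size s).
elim: k => // k IHk in s a Ka Hs Eb * => lt_s; case Hh: (has (kept H r) s); last first.
  move: (mem_last a s); rewrite -Eb inE => /orP[/eqP-> //|bs].
  by move: Hh; rewrite (introT hasP) //; exists b.
move: Hs lt_s Eb; case: (split_find Hh) => w s1 s2 Kw Ns1.
rewrite cat_path last_cat last_rcons size_cat size_rcons => /andP[Hs1 Hs2] lt_s Eb.
apply: (connect_trans (y := w)); last first.
  by apply: (IHk s2 w Kw Hs2 Eb); rewrite -ltnS (leq_trans _ lt_s) // ltnS addSn ltnS leq_addl.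
case: (eqVneq a w) => [->|aw]; first exact: connect0.
by apply/connect1/(cedge_unkept_path Ka Kw aw Hs1).
Qed.

(* Both sides are cedge-connectivity of kept leaves, which f transports both ways. *)
Lemma fiso_connect_lab r A G x y : (forall z, lab A z \in fV A) -> fiso r A G ->
  connect (fE G) (lab G x) (lab G y) = connect (fE A) (lab A x) (lab A y).
Proof.
move=> HA [f [f_inj [Kf [f_cedge [f_lab _]]]]].
have KA z := kept_lab r (HA z).
have KfA a : kept A r a -> kept G r (f a) by move=> Ka; apply/Kf; exists a.
rewrite -!f_lab -(connect_cedgeE (KfA _ (KA x)) (KfA _ (KA y))).
rewrite -(connect_cedgeE (KA x) (KA y)).
apply/idP/idP; last first.
  case/connectP=> s; elim: s (lab A x) (KA x) => [|b s IHs] a Ka /=; first by move=> _ ->.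
  case/andP=> Cab Hs Eb; have /and3P[_ Kb _] := Cab.
  by apply: connect_trans (IHs b Kb Hs Eb); apply: connect1; rewrite f_cedge.
case/connectP=> s; elim: s (lab A x) (KA x) => [|w s IHs] a Ka /=.
  by move=> _ /(f_inj _ _ (KA y) Ka) ->; apply: connect0.
case/andP=> Cw Hs Eb; have /and3P[_ Kw _] := Cw.
have [b Kb Ew] := iffLR (Kf w) Kw; subst w.
by rewrite f_cedge // in Cw; apply: connect_trans (connect1 Cw) (IHs b Kb Hs Eb).
Qed.

End Contraction.

Section LeaflessEdge.
Variables (X : finType) (F : forest X) (r : option X).
Variables (E E' : rel 'I_(fn F)) (c d : 'I_(fn F)).
Hypotheses (sE : symmetric E) (sE' : symmetric E') (E'E : subrel E' E).
Hypothesis EE' : subrel_plus_edge E E' c d.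
Hypothesis leafless_c : forall x, ~~ connect E' (lab F x) c.

Let G := with_edges F E.
Let G' := with_edges F E'.

Lemma hull_leafless z : hull G' z -> ~~ connect E' z c.
Proof.
case/andP=> _ /existsP[x /existsP[y /onpath_connect Cxz]].
by apply: contra (leafless_c x); apply: connect_trans Cxz.
Qed.

Lemma hull_rmedge z : hull G z = hull G' z.
Proof.
rewrite /hull; congr (_ && _); apply: eq_existsb => x; apply: eq_existsb => y.
exact: onpath_plus_edgeE sE sE' E'E EE' (leafless_c x) (leafless_c y).
Qed.

Lemma hdeg_rmedge z : hull G' z -> hdeg G z = hdeg G' z.
Proof.
move=> Hz; rewrite /hdeg; apply: eq_card => w; rewrite !inE hull_rmedge.
case Hw: (hull G' w); rewrite ?andbF // !andbT /=.
apply/idP/idP => [Ezw|/E'E//]; apply: contraT => N'zw.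
by case/orP: (EE' Ezw N'zw) => /andP[/eqP Ez /eqP Ew];
  [move: (hull_leafless Hz)|move: (hull_leafless Hw)]; rewrite ?Ez ?Ew connect0.
Qed.

Lemma croot_rmedge z : hull G' z -> croot G r z = croot G' r z.
Proof.
case: r => [rho|//] Hz; have Nz := hull_leafless Hz.
have CzE y : connect E z (lab F y) = connect E' z (lab F y).
  exact: connect_plus_edgeE sE sE' E'E EE' Nz (leafless_c y).
have compLE : compL G z = compL G' z.
  by apply/setP => w; rewrite !inE; apply: eq_existsb => y; rewrite /= CzE.
by rewrite /croot compLE (CzE rho).
Qed.

Lemma kept_rmedge z : kept G r z = kept G' r z.
Proof.
rewrite /kept hull_rmedge; apply: andb_id2l => Hz.
by rewrite (hdeg_rmedge Hz) (croot_rmedge Hz).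
Qed.

Lemma cedge_rmedge a b : kept G' r a -> kept G' r b -> cedge G r a b = cedge G' r a b.
Proof.
move=> /andP[/hull_leafless Na _] /andP[/hull_leafless Nb _].
rewrite /cedge !kept_rmedge (connect_plus_edgeE sE sE' E'E EE' Na Nb).
do 4 apply: andb_id2l => _; apply: eq_forallb => w.
by rewrite (onpath_plus_edgeE w sE sE' E'E EE' Na Nb) kept_rmedge.
Qed.

Lemma fiso_rmedge A : fiso r A G -> fiso r A G'.
Proof.
case=> f [f_inj [Kf [f_cedge [f_lab f_croot]]]]; exists f.
have KfA v : kept A r v -> kept G' r (f v).
  by move=> Kv; rewrite -kept_rmedge; apply/Kf; exists v.
split; first exact: f_inj.
split; first by move=> w; rewrite -kept_rmedge; apply: Kf.
split.
  move=> a b Ka Kb; rewrite -(cedge_rmedge (KfA a Ka) (KfA b Kb)); exact: f_cedge.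
split; first exact: f_lab.
move=> v Kv; have /andP[Hfv _] := KfA v Kv.
rewrite -(croot_rmedge Hfv); exact: f_croot.
Qed.

End LeaflessEdge.

Section Subforests.
Variables (X : finType) (r : option X).
Implicit Types (B F : forest X).

Lemma Xforest_lab F : is_Xforest F -> forall x, lab F x \in fV F.
Proof. by case=> [_ [_ [_ [_ [_ []]]]]]. Qed.

Lemma subforest_connect_lab B F x y : is_Xforest B -> subforest r B F ->
  connect (fE B) (lab B x) (lab B y) -> connect (fE F) (lab F x) (lab F y).
Proof.
move=> HB [E [EF [_ isoB]]].
by rewrite -(fiso_connect_lab x y (Xforest_lab HB) isoB); apply: connect_subrel.
Qed.

Lemma subforest_del_edge_sub B F u v :
  subforest r B (del_edge F u v) -> subforest r B F.
Proof. by case=> E [EF [sE isoB]]; exists E; split=> // a b /EF/andP[]. Qed.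

Lemma subforest_del_edge B F u v : is_Xforest B -> subforest r B F ->
  (forall x y, connect (fE (del_edge F u v)) u (lab F x) ->
     connect (fE (del_edge F u v)) v (lab F y) -> ~~ connect (fE B) (lab B x) (lab B y)) ->
  subforest r B (del_edge F u v).
Proof.
move=> HB [E [EF [sE isoB]]] Hsep; set E' := rmedge _ E u v.
have sE' : symmetric E' by apply: rmedge_sym.
have E'F : subrel E' (fE (del_edge F u v)).
  by move=> a b /andP[/EF Fab Nab]; rewrite /= /rmedge /= Fab.
case Euv: (E u v); last first.
  exists E; split; last by split; [exact: sE|exact: isoB].
  move=> a b Eab; apply: E'F; rewrite /E' /rmedge /= Eab /=.
  apply/negP => /orP[] /andP[/eqP Ea /eqP Eb]; subst a b.
    by rewrite Euv in Eab.
  by rewrite sE Euv in Eab.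
exists E'; split; first exact: E'F.
split; first exact: sE'.
have [Nu|Nv] : (forall x, ~~ connect E' (lab F x) u) \/ (forall y, ~~ connect E' (lab F y) v).
  case: (boolP [exists x, connect E' (lab F x) u]) => [/existsP[x Cxu]|/existsPn]; last by left.
  right=> y; apply/negP => Cyv.
  have Cux : connect (fE (del_edge F u v)) u (lab F x).
    by apply: connect_subrel E'F _ _ _; rewrite (sym_connect_sym sE').
  have Cvy : connect (fE (del_edge F u v)) v (lab F y).
    by apply: connect_subrel E'F _ _ _; rewrite (sym_connect_sym sE').
  case/negP: (Hsep x y Cux Cvy).
  rewrite -(fiso_connect_lab x y (Xforest_lab HB) isoB).
  apply: connect_trans (connect_subrel (@rmedge_sub _ E u v) Cxu) _.
  apply: connect_trans (connect1 Euv) _.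
  by apply: connect_subrel (@rmedge_sub _ E u v) _ _ _; rewrite (sym_connect_sym sE').
- exact: (fiso_rmedge sE sE' (@rmedge_sub _ E u v) (@rmedge_plus_edge _ E u v) Nu isoB).
- exact: (fiso_rmedge sE sE' (@rmedge_sub _ E u v)
    (subrel_plus_edgeC (@rmedge_plus_edge _ E u v)) Nv isoB).
Qed.

Lemma maf_agreementE m (Fs Gs : 'I_m -> forest X) A :
  (forall B, agreement r m Fs B <-> agreement r m Gs B) ->
  maf r m Fs A <-> maf r m Gs A.
Proof.
by move=> FG; split=> -[agA minA]; split=> [|B /FG]; [exact/FG| |exact/FG|]; apply: minA.
Qed.

End Subforests.

Unset Implicit Arguments.
Theorem lemma3p1 (X : finType) (r : option X) (m : nat)
  (Fs : 'I_m -> forest X) (Hm : 2 <= m)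
  (HF : forall i, is_Xforest (Fs i))
  (p q : 'I_m) (Ts : {set 'I_(fn (Fs p))})
  (HTs0 : Ts != set0) (HTs : Ts \subset fV (Fs p))
  (Hqp : q != p) (u v : 'I_(fn (Fs q))) (He : fE (Fs q) u v) :
  let Y := [set x | [exists w in Ts, connect (fE (Fs p)) w (lab (Fs p) x)]] in
  let Fq' := del_edge (Fs q) u v in
  (forall x, connect (fE Fq') u (lab Fq' x) -> x \in Y) ->
  (forall x, connect (fE Fq') v (lab Fq' x) -> x \notin Y) ->
  forall A : forest X,
    maf r m Fs A <-> maf r m (fun j => if j == q then Fq' else Fs j) A.
Proof.
move=> Y Fq' HY1 HY2 A; apply: maf_agreementE => B.
split=> -[HB subB]; split=> // i /=; last first.
  by move: (subB i); case: ifP => [/eqP-> /subforest_del_edge_sub|].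
case: ifP => [_|_ //]; apply: (subforest_del_edge HB (subB q)) => x y Cux Cvy.
apply/negP => /(subforest_connect_lab HB (subB p)) Cxy.
have /[!inE] /existsP[w /andP[Tw Cwx]] := HY1 x Cux.
by move: (HY2 y Cvy); rewrite inE => /existsP[]; exists w; rewrite Tw (connect_trans Cwx Cxy).
Qed.
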